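(* Let $\mathcal{S}_{\mathbb{R}}$ be the class of functions $f(z)=z+\sum_{n\ge2}a_nz^n$ in $\mathcal{S}$ all of whose coefficients $a_n$ are real. Then the harmonic analogue of $\mathcal{S}_{\mathbb{R}}$ is $\mathcal{S}_{\mathbb{R}}$ itself; that is, a harmonic function $f=h+\bar g$ ($h,g$ analytic in $\mathbb{D}$) satisfies $h+\epsilon g\in\mathcal{S}_{\mathbb{R}}$ for every $|\epsilon|=1$ if and only if $g\equiv0$ and $h\in\mathcal{S}_{\mathbb{R}}$.
   Context: $\mathbb{D}$ is the open unit disk. $\mathcal{S}$ is the class of analytic univalent functions $f$ in $\mathbb{D}$ with $f(0)=0$, $f'(0)=1$. For $\mathcal{G}\subset\mathcal{S}$, its harmonic analogue is the class of harmonic $f=h+\bar g$ ($h,g$ analytic in $\mathbb{D}$) such that $h+\epsilon g\in\mathcal{G}$ for every $\epsilon\in\mathbb{C}$ with $|\epsilon|=1$. *)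

From Stdlib Require Import Reals.
From Coquelicot Require Import Coquelicot.
Open Scope R_scope.

Definition inD (z : C) : Prop := Cmod z < 1.

Definition analytic_D (f : C -> C) : Prop :=
  forall z : C, inD z -> exists l : C,
    @is_derive C_AbsRing C_NormedModule f z l.

Definition taylor_coeffs_D (f : C -> C) (c : nat -> C) : Prop :=
  forall z : C, inD z -> @is_pseries C_AbsRing C_NormedModule c z (f z).

Definition class_S (f : C -> C) : Prop :=
  analytic_D f /\
  (forall z w : C, inD z -> inD w -> f z = f w -> z = w) /\
  f (RtoC 0) = RtoC 0 /\
  @is_derive C_AbsRing C_NormedModule f (RtoC 0) (RtoC 1).

Definition class_SR (f : C -> C) : Prop :=
  class_S f /\
  exists c : nat -> C, taylor_coeffs_D f c /\ forall n, Im (c n) = 0.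

(* Harmonic analogue of a class G: f = h + conj g with h, g analytic in D
   and h + eps g in G for every unimodular eps. Represented by the pair (h,g). *)
Definition harmonic_analogue (G : (C -> C) -> Prop) (h g : C -> C) : Prop :=
  analytic_D h /\ analytic_D g /\
  forall eps : C, Cmod eps = 1 -> G (fun z => h z + eps * g z)%C.

From Stdlib Require Import Reals Lra.
From Coquelicot Require Import Coquelicot.
Open Scope R_scope.

(* A function with real Taylor coefficients commutes with complex conjugation.
   For [h + g] and [h - g] this gives [g (conj z) = conj (g z)], while for
   [h + i g] it gives [i g (conj z) = conj (i g z) = - i conj (g z)]; hence
   [g = 0]. *)

Lemma Cconj_continuous (l : C) :
  filterlim Cconj (@locally C_NormedModule l) (@locally C_NormedModule (Cconj l)).
Proof.
intros P [e He]; exists e; intros y [Hre Him]; apply He; split; [exact Hre|].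
change (Rabs (- snd y + - - snd l) < e).
replace (- snd y + - - snd l) with (- (snd y + - snd l)) by ring.
now rewrite Rabs_Ropp.
Qed.

Lemma Cconj_real (a : C) : Im a = 0 -> Cconj a = a.
Proof. destruct a as [x y]; simpl; intros ->; unfold Cconj; simpl; f_equal; ring. Qed.

Lemma sum_n_Cconj (a : nat -> C) (n : nat) :
  @sum_n C_NormedModule (fun k => Cconj (a k)) n = Cconj (@sum_n C_NormedModule a n).
Proof.
induction n as [|n IH]; [now rewrite !sum_O|].
rewrite !sum_Sn, IH; symmetry; apply Cplus_conj.
Qed.

Lemma is_pseries_Cconj (c : nat -> C) (z l : C) :
  (forall n, Im (c n) = 0) ->
  @is_pseries C_AbsRing C_NormedModule c z l ->
  @is_pseries C_AbsRing C_NormedModule c (Cconj z) (Cconj l).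
Proof.
intros Hc Hl.
assert (Hterm : forall k, scal (@pow_n C_AbsRing (Cconj z) k) (c k)
                         = Cconj (scal (@pow_n C_AbsRing z k) (c k))).
{ intro k; change (Cconj z ^ k * c k = Cconj (z ^ k * c k))%C.
  now rewrite Cmult_conj, Cpow_conj, (Cconj_real _ (Hc k)). }
eapply filterlim_ext.
{ intro n; rewrite <- sum_n_Cconj; apply (sum_n_ext _ _ n (fun k => eq_sym (Hterm k))). }
eapply filterlim_comp; [exact Hl|apply Cconj_continuous].
Qed.

Lemma inD_Cconj (z : C) : inD z -> inD (Cconj z).
Proof. now unfold inD; rewrite Cmod_conj. Qed.

Lemma class_SR_Cconj (F : C -> C) (z : C) :
  class_SR F -> inD z -> F (Cconj z) = Cconj (F z).
Proof.
intros [_ [c [Hc Hreal]]] Hz.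
exact (filterlim_locally_unique _ _ _ (Hc _ (inD_Cconj z Hz))
         (is_pseries_Cconj c z _ Hreal (Hc z Hz))).
Qed.

Lemma inD_locally (z : C) : inD z -> @locally (AbsRing_UniformSpace C_AbsRing) z inD.
Proof.
intro Hz; assert (He : 0 < 1 - Cmod z) by (unfold inD in Hz; lra).
exists (mkposreal _ He); intros y Hy; unfold inD.
replace y with (z + minus y z)%C by (unfold minus, plus, opp; simpl; ring).
eapply Rle_lt_trans; [apply Cmod_triangle|].
change (Cmod (minus y z) < 1 - Cmod z) in Hy; lra.
Qed.

Lemma class_SR_ext (f1 f2 : C -> C) :
  (forall z, inD z -> f1 z = f2 z) -> class_SR f1 -> class_SR f2.
Proof.
intros E [[Ha [Hinj [H0 Hd]]] [c [Hc Hreal]]].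
assert (E_loc : forall z, inD z ->
  @locally (AbsRing_UniformSpace C_AbsRing) z (fun t => f1 t = f2 t)).
{ intros z Hz; exact (filter_imp _ _ E (inD_locally z Hz)). }
assert (D0 : inD 0) by (unfold inD; rewrite Cmod_0; lra).
split; [split; [|split; [|split]]|].
- intros z Hz; destruct (Ha z Hz) as [l Hl]; exists l.
  exact (is_derive_ext_loc _ _ _ _ (E_loc z Hz) Hl).
- intros z w Hz Hw Hzw; apply Hinj; [exact Hz|exact Hw|now rewrite !E].
- now rewrite <- E.
- exact (is_derive_ext_loc _ _ _ _ (E_loc _ D0) Hd).
- exists c; split; [intros z Hz; rewrite <- E; auto|exact Hreal].
Qed.

Lemma Cconj_symmetric_rotations_zero (u v u' v' : C) :
  (u' + 1 * v' = Cconj (u + 1 * v))%C ->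
  (u' + - (1) * v' = Cconj (u + - (1) * v))%C ->
  (u' + Ci * v' = Cconj (u + Ci * v))%C ->
  v = 0%C.
Proof.
destruct u, v, u', v'; unfold Cconj, Cplus, Cmult, Copp, Ci, RtoC; simpl.
intros E1 E2 E3; injection E1; injection E2; injection E3; intros.
unfold RtoC; f_equal; lra.
Qed.

Lemma Cmod_Ci : Cmod Ci = 1.
Proof.
unfold Cmod, Ci; simpl.
replace (0 * (0 * 1) + 1 * (1 * 1)) with 1 by ring; apply sqrt_1.
Qed.

Lemma add_scaled_vanishing (h g : C -> C) (eps : C) :
  (forall z, inD z -> g z = 0%C) -> forall z, inD z -> h z = (h z + eps * g z)%C.
Proof. intros G0 z Hz; rewrite G0 by exact Hz; ring. Qed.

Theorem theorem3p10 (h g : C -> C) :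
  analytic_D h -> analytic_D g ->
  (harmonic_analogue class_SR h g <->
   ((forall z : C, inD z -> g z = 0) /\ class_SR h)).
Proof.
intros Ah Ag; split.
- intros [_ [_ Hrot]].
  pose proof (Hrot 1%C Cmod_1) as Hplus.
  assert (G0 : forall z, inD z -> g z = 0%C).
  { intros z Hz.
    apply (Cconj_symmetric_rotations_zero (h z) _ (h (Cconj z)) (g (Cconj z)));
      [apply (class_SR_Cconj _ z Hplus Hz)
      |apply (class_SR_Cconj _ z (Hrot _ Cmod_m1) Hz)
      |apply (class_SR_Cconj _ z (Hrot _ Cmod_Ci) Hz)]. }
  split; [exact G0|].
  refine (class_SR_ext _ h _ Hplus).
  intros z Hz; symmetry; exact (add_scaled_vanishing h g 1 G0 z Hz).
- intros [G0 Hh]; split; [exact Ah|split; [exact Ag|]].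
  intros eps _; exact (class_SR_ext h _ (add_scaled_vanishing h g eps G0) Hh).
Qed.
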